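(* Let $\mathcal{G}$ be a simple temporal graph with $n>2$ vertices. Then, in the strict setting, $\mathcal{G}$ does not admit a temporal spanning tree.
   Context: A temporal graph is $\mathcal{G}=(V,E,\lambda)$ with $V$ a finite vertex set, $E$ a set of undirected edges, and $\lambda:E\to 2^{\mathbb{N}}$ assigning time labels to edges; $(V,E)$ is the footprint. It is simple if every edge has exactly one time label. In the strict setting, a temporal path is a sequence of pairs $(e_i,t_i)$ with $t_i\in\lambda(e_i)$, $\langle e_i\rangle$ a path in the footprint and $\langle t_i\rangle$ strictly increasing. A temporal subgraph keeps a subgraph of the footprint with labels restricted from $\lambda$. A temporal spanning tree of $\mathcal{G}$ is a temporal subgraph spanning all vertices whose footprint is a tree and in which there is a temporal path from every vertex to every other vertex. *)

From mathcomp Require Import all_boot.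
Set Implicit Arguments. Unset Strict Implicit. Unset Printing Implicit Defensive.

Section TemporalGraphs.
Variable V : finType.

(* A temporal graph on vertex set V: an edge set E of 2-element subsets of V
   (the footprint (V,E)) and a labelling lam : {set V} -> pred nat
   (lam e is the set of time labels of e; only consulted on edges). *)
Definition undirected_edges (E : {set {set V}}) : Prop :=
  forall e, e \in E -> #|e| = 2.

Definition simple_temporal (E : {set {set V}}) (lam : {set V} -> pred nat) : Prop :=
  forall e, e \in E -> exists t, forall t', lam e t' = (t' == t).

Definition adj (F : {set {set V}}) : rel V := fun a b => [set a; b] \in F.

Definition fpath (F : {set {set V}}) (u v : V) : Prop :=
  exists xs : seq V, [/\ uniq (u :: xs), path (adj F) u xs & last u xs = v].

Definition has_cycle (F : {set {set V}}) : Prop :=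
  exists (x : V) (xs : seq V),
    [/\ 2 <= size xs, uniq (x :: xs), path (adj F) x xs & adj F (last x xs) x].

Definition is_tree (F : {set {set V}}) : Prop :=
  (forall u v, fpath F u v) /\ ~ has_cycle F.

Definition temporal_path (F : {set {set V}}) (lam : {set V} -> pred nat)
    (u v : V) : Prop :=
  exists (xs : seq V) (ts : seq nat),
    [/\ size ts = size xs, uniq (u :: xs), last u xs = v,
        (forall i, i < size xs ->
           [set nth u (u :: xs) i; nth u xs i] \in F /\
           lam [set nth u (u :: xs) i; nth u xs i] (nth 0 ts i))
      & sorted ltn ts].

Definition temporal_spanning_tree (E : {set {set V}}) (lam : {set V} -> pred nat)
    (F : {set {set V}}) : Prop :=
  [/\ F \subset E, is_tree F & forall u v, u != v -> temporal_path F lam u v].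

End TemporalGraphs.

(* A tree on at least three vertices contains a path a - b - c.  Since the
   footprint is acyclic, the only path from a to c is a, b, c, so a strict
   temporal path from a to c needs the label of {a, b} to be smaller than that
   of {b, c}, while one from c to a needs the opposite.  With a single label
   per edge both cannot hold. *)
From Pilot Require Import Defs.
From mathcomp Require Import all_boot.

Set Implicit Arguments.
Unset Strict Implicit.
Unset Printing Implicit Defensive.

Section Footprint.
Variable V : finType.
Implicit Types (F : {set {set V}}) (a b c u v w : V) (xs : seq V).

Lemma adjC F u v : adj F u v = adj F v u.
Proof. by rewrite /adj setUC. Qed.

Definition wedge F a b c :=
  [/\ a != b, b != c, a != c, adj F a b & adj F b c].

Lemma wedgeC F a b c : wedge F a b c -> wedge F c b a.
Proof.
by case=> nab nbc nac Fab Fbc; split; rewrite 1?eq_sym // adjC.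
Qed.

Lemma wedge_path F u xs :
  uniq (u :: xs) -> path (adj F) u xs -> 2 <= size xs ->
  exists b c, wedge F u b c.
Proof.
case: xs => [|b [|c xs]] //= /and3P[+ + _] /and3P[Fub Fbc _] _.
rewrite !inE !negb_or => /and3P[nub nuc _] /andP[nbc _].
by exists b, c.
Qed.

Lemma fpath_adj_or_wedge F u v :
  Defs.fpath F u v -> u != v -> adj F u v \/ exists b c, wedge F u b c.
Proof.
case=> [[|x [|y xs]] [Uxs Pxs <-]]; rewrite ?eqxx //= => _.
- by left; case/andP: Pxs.
- by right; apply: (wedge_path Uxs Pxs).
Qed.

Lemma card_gt2_distinct3 :
  2 < #|V| -> exists u v w, [/\ u != v, v != w & u != w].
Proof.
rewrite cardE; have := enum_uniq V.
case: (enum V) => [|u [|v [|w s]]] //= /and4P[+ + _ _ _].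
rewrite !inE !negb_or => /and3P[nuv nuw _] /andP[nvw _].
by exists u, v, w.
Qed.

Lemma connected_wedge F :
  (forall u v, Defs.fpath F u v) -> 2 < #|V| -> exists a b c, wedge F a b c.
Proof.
move=> Fconn /card_gt2_distinct3[u [v [w [nuv nvw nuw]]]].
have [Fuv | [b [c Wubc]]] := fpath_adj_or_wedge (Fconn u v) nuv; last first.
  by exists u, b, c.
have [Fuw | [b [c Wubc]]] := fpath_adj_or_wedge (Fconn u w) nuw; last first.
  by exists u, b, c.
by exists v, u, w; split; rewrite // 1?eq_sym // adjC.
Qed.

(* Each case in which [xs] is not [b; c] closes a cycle through an edge of
   the wedge. *)
Lemma acyclic_wedge_path F a b c xs :
  ~ has_cycle F -> wedge F a b c ->
  uniq (a :: xs) -> path (adj F) a xs -> last a xs = c -> xs = [:: b; c].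
Proof.
move=> Facyc [nab nbc nac Fab Fbc] Uxs Pxs Lxs.
have [b_xs | bNxs] := boolP (b \in xs); last first.
  case: Facyc; exists b, (a :: xs); split.
  - by case: xs Lxs {Uxs Pxs bNxs} => [/= Eac|? ? _] //; rewrite Eac eqxx in nac.
  - by rewrite cons_uniq Uxs andbT inE negb_or bNxs eq_sym nab.
  - by rewrite /= adjC Fab.
  - by rewrite /= Lxs adjC.
case/splitPr: b_xs Uxs Pxs Lxs => [[|y p1] p2] Uxs Pxs Lxs; last first.
  case: Facyc; exists a, (y :: rcons p1 b).
  have Ep : (y :: p1) ++ b :: p2 = (y :: rcons p1 b) ++ p2 by rewrite /= cat_rcons.
  move: Uxs Pxs; rewrite Ep -cat_cons cat_uniq cat_path.
  move=> /and3P[U1 _ _] /andP[P1 _].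
  by split; rewrite //= ?size_rcons ?last_rcons // adjC.
case: p2 Uxs Pxs Lxs => [|z [|w p3]] /= Uxs Pxs Lxs.
- by rewrite Lxs eqxx in nbc.
- by rewrite Lxs.
- case: Facyc; exists b, [:: z, w & p3]; split => //.
  + by case/andP: Uxs.
  + by case/andP: Pxs.
  + by rewrite /= Lxs adjC.
Qed.

Lemma acyclic_wedge_temporal_path F (lam : {set V} -> pred nat) a b c :
  ~ has_cycle F -> wedge F a b c -> temporal_path F lam a c ->
  exists t0 t1, [/\ t0 < t1, lam [set a; b] t0 & lam [set b; c] t1].
Proof.
move=> Facyc Wabc [xs [ts [Sts Uxs Lxs Exs Sorted]]].
have Pxs : path (adj F) a xs by apply/(pathP a) => i /Exs[].
have Exs_bc := acyclic_wedge_path Facyc Wabc Uxs Pxs Lxs.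
subst xs; case: ts Sts Sorted Exs => [|t0 [|t1 []]] //= _ /andP[lt01 _] Exs.
by exists t0, t1; split; [| case: (Exs 0 isT) | case: (Exs 1 isT)].
Qed.

End Footprint.

Lemma simple_temporal_label_eq (V : finType) (E : {set {set V}}) lam e t s :
  simple_temporal E lam -> e \in E -> lam e t -> lam e s -> t = s.
Proof. by move=> Esimple /Esimple[r Elam]; rewrite !Elam => /eqP-> /eqP->. Qed.

Theorem lemma1 (V : finType) (E : {set {set V}}) (lam : {set V} -> pred nat) :
  undirected_edges E -> simple_temporal E lam -> 2 < #|V| ->
  ~ exists F : {set {set V}}, temporal_spanning_tree E lam F.
Proof.
move=> _ Esimple V_gt2 [F [FsubE [Fconn Facyc] Ftemp]].
have [a [b [c Wabc]]] := connected_wedge Fconn V_gt2.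
have Wcba := wedgeC Wabc.
have nac : a != c by case: Wabc.
have nca : c != a by case: Wcba.
have [t0 [t1 [lt01 Lab0 Lbc1]]] :=
  acyclic_wedge_temporal_path Facyc Wabc (Ftemp a c nac).
have [s0 [s1 [lt01' Lcb0 Lba1]]] :=
  acyclic_wedge_temporal_path Facyc Wcba (Ftemp c a nca).
have [_ _ _ Fab Fbc] := Wabc.
rewrite setUC in Lcb0; rewrite setUC in Lba1.
have Ets1 := simple_temporal_label_eq Esimple (subsetP FsubE _ Fab) Lab0 Lba1.
have Ets0 := simple_temporal_label_eq Esimple (subsetP FsubE _ Fbc) Lbc1 Lcb0.
by move: lt01'; rewrite -Ets1 -Ets0 ltnNge ltnW.
Qed.
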